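(* Let $\eta>0$ and $\theta>0$, and let $(\bar q(t))_{t\in\mathbb Z_+}$ be a sequence in $(0,1)$ such that $$\bar q(t+1)-\bar q(t)\le-\frac{\eta\,\bar q(t)^2}{\log\big(e-\log(\theta\bar q(t))\big)}\quad\text{for all }t,$$ and $\theta\bar q(0)\le1$. Then for every $T$ with $\eta T/\theta\ge1$, $$\bar q(T)\le\frac{1}{\eta T}\log\Big(e+\log\Big(\frac{\eta T}{\theta}\Big)\Big).$$ *)

From Stdlib Require Export Reals.
Open Scope R_scope.

(* Along the recursion [theta * q t] stays in (0, 1], so the denominator
   [llog (theta * q t)] is at least 1 and [q] decreases.  Passing to
   reciprocals, each step raises [1 / q] by at least [eta / llog (theta * q t)],
   and since [llog] is decreasing these increments are all at least
   [eta / llog (theta * q T)] up to time [T].  Hence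
   [eta * T * q T <= llog (theta * q T)], an implicit inequality of the form
   [S x <= llog x] with [S = eta T / theta] and [x = theta * q T]; because
   [S x] increases and [llog x] decreases in [x], it forces
   [S x <= llog (1 / S) = ln (e + ln S)]. *)

From Stdlib Require Import Reals Lra Lia.
From Coquelicot Require Import Rcomplements.
Open Scope R_scope.

Set Implicit Arguments.

Definition llog (x : R) : R := ln (exp 1 - ln x).

Lemma ln_nonpos (x : R) : 0 < x -> x <= 1 -> ln x <= 0.
Proof. intros Hx Hx1. rewrite <- ln_1. now apply ln_le. Qed.

Lemma llog_ge_1 (x : R) : 0 < x -> x <= 1 -> 1 <= llog x.
Proof.
  intros Hx Hx1. unfold llog.
  pose proof (ln_nonpos Hx Hx1). pose proof (exp_pos 1).
  rewrite <- (ln_exp 1) at 1. apply ln_le; lra.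
Qed.

Lemma llog_antitone (x y : R) : 0 < x -> x <= y -> y <= 1 -> llog y <= llog x.
Proof.
  intros Hx Hxy Hy1. unfold llog.
  pose proof (ln_nonpos (Rlt_le_trans _ _ _ Hx Hxy) Hy1).
  pose proof (ln_le _ _ Hx Hxy). pose proof (exp_pos 1).
  apply ln_le; lra.
Qed.

Lemma llog_inv (S : R) : 0 < S -> llog (/ S) = ln (exp 1 + ln S).
Proof. intros HS. unfold llog. rewrite ln_Rinv by exact HS. f_equal; ring. Qed.

Lemma le_llog_inv (S x : R) :
  1 <= S -> 0 < x -> x <= 1 -> S * x <= llog x -> S * x <= llog (/ S).
Proof.
  intros HS Hx Hx1 Hle.
  assert (HS0 : 0 < / S) by (apply Rinv_0_lt_compat; lra).
  destruct (Rle_or_lt (S * x) 1) as [Hsmall | Hbig].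
  - apply Rle_trans with 1; [exact Hsmall |].
    apply llog_ge_1; [exact HS0 |].
    rewrite <- Rinv_1. apply Rinv_le_contravar; lra.
  - apply Rle_trans with (llog x); [exact Hle |].
    apply llog_antitone; [exact HS0 | | exact Hx1].
    apply (Rmult_le_reg_l S); [lra |]. rewrite Rinv_r; lra.
Qed.

Lemma inv_add_le_of_le_sub_sq (c u v : R) :
  0 <= c -> 0 < v -> v <= u - c * u ^ 2 -> / u + c <= / v.
Proof.
  intros Hc Hv Huv.
  assert (Hu : 0 < u) by nra.
  assert (Hnum : (1 + c * u) * v <= u).
  { assert ((1 + c * u) * v <= (1 + c * u) * (u - c * u ^ 2))
      by (apply Rmult_le_compat_l; nra).
    assert (0 <= (c * u) ^ 2 * u) by (apply Rmult_le_pos; nra).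
    nra. }
  assert (Hdiff : / v - (/ u + c) = (u - (1 + c * u) * v) / (u * v))
    by (field; lra).
  assert (0 <= (u - (1 + c * u) * v) / (u * v))
    by (apply Rdiv_le_0_compat; [lra | now apply Rmult_lt_0_compat]).
  lra.
Qed.

Lemma telescope_lower (u : nat -> R) (a : R) (T : nat) :
  (forall t, (t < T)%nat -> u t + a <= u (S t)) -> u 0%nat + INR T * a <= u T.
Proof.
  induction T as [| T IHT]; intros Hstep.
  - simpl. lra.
  - rewrite S_INR.
    pose proof (IHT (fun t Ht => Hstep t ltac:(lia))).
    pose proof (Hstep T ltac:(lia)).
    lra.
Qed.

Section Recursion.

Variables (eta theta : R) (q : nat -> R).
Hypothesis eta_pos : 0 < eta.
Hypothesis theta_pos : 0 < theta.
Hypothesis q_pos : forall t, 0 < q t.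
Hypothesis q_rec :
  forall t, q (S t) - q t <= - (eta * q t ^ 2) / llog (theta * q t).
Hypothesis theta_q0_le_1 : theta * q 0%nat <= 1.

Lemma q_step_le t : theta * q t <= 1 -> q (S t) <= q t.
Proof.
  intros Ht.
  pose proof (llog_ge_1 (Rmult_lt_0_compat _ _ theta_pos (q_pos t)) Ht).
  assert (0 <= eta * q t ^ 2 / llog (theta * q t))
    by (apply Rdiv_le_0_compat; [apply Rmult_le_pos; [lra | apply pow2_ge_0] | lra]).
  pose proof (q_rec t) as Hr. rewrite Rdiv_opp_l in Hr.
  lra.
Qed.

Lemma theta_q_le_1 t : theta * q t <= 1.
Proof.
  induction t as [| t IHt]; [exact theta_q0_le_1 |].
  apply Rle_trans with (theta * q t); [| exact IHt].
  apply Rmult_le_compat_l; [lra |]. now apply q_step_le.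
Qed.

Lemma q_decreasing : Un_decreasing q.
Proof. intro t. exact (q_step_le (theta_q_le_1 t)). Qed.

Lemma inv_q_step t : / q t + eta / llog (theta * q t) <= / q (S t).
Proof.
  pose proof (llog_ge_1 (Rmult_lt_0_compat _ _ theta_pos (q_pos t)) (theta_q_le_1 t)).
  apply inv_add_le_of_le_sub_sq; [apply Rdiv_le_0_compat; lra | apply q_pos |].
  assert (- (eta * q t ^ 2) / llog (theta * q t)
          = - (eta / llog (theta * q t) * q t ^ 2)) by (unfold Rdiv; ring).
  pose proof (q_rec t). lra.
Qed.

Lemma inv_q_lower T : INR T * (eta / llog (theta * q T)) <= / q T.
Proof.
  assert (Hstep : forall t, (t < T)%nat ->
            / q t + eta / llog (theta * q T) <= / q (S t)).
  { intros t Ht.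
    pose proof (q_pos t). pose proof (q_pos T).
    assert (HqTt : q T <= q t) by (apply decreasing_prop; [exact q_decreasing | lia]).
    assert (1 <= llog (theta * q t))
      by (apply llog_ge_1; [apply Rmult_lt_0_compat | apply theta_q_le_1]; lra).
    assert (llog (theta * q t) <= llog (theta * q T)).
    { apply llog_antitone; [apply Rmult_lt_0_compat; lra | | apply theta_q_le_1].
      apply Rmult_le_compat_l; lra. }
    apply Rle_trans with (/ q t + eta / llog (theta * q t)); [| apply inv_q_step].
    apply Rplus_le_compat_l, Rmult_le_compat_l; [lra |].
    apply Rinv_le_contravar; lra. }
  pose proof (telescope_lower (fun t => / q t) Hstep).
  pose proof (Rinv_0_lt_compat _ (q_pos 0%nat)).
  lra.
Qed.

Lemma eta_T_q_le_llog T : eta * INR T * q T <= llog (theta * q T).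
Proof.
  set (M := llog (theta * q T)).
  assert (HM : 1 <= M)
    by (apply llog_ge_1; [apply Rmult_lt_0_compat, q_pos | apply theta_q_le_1]; lra).
  pose proof (q_pos T) as HqT.
  assert (Hscaled : eta * INR T * q T = INR T * (eta / M) * (q T * M))
    by (unfold M in *; field; lra).
  rewrite Hscaled.
  apply Rle_trans with (/ q T * (q T * M)).
  - apply Rmult_le_compat_r; [apply Rmult_le_pos; lra | apply inv_q_lower].
  - rewrite <- Rmult_assoc, Rinv_l by lra. lra.
Qed.

End Recursion.

Theorem lemma22 (eta theta : R) (q : nat -> R)
  (Heta : 0 < eta) (Htheta : 0 < theta)
  (Hq : forall t : nat, 0 < q t < 1)
  (Hrec : forall t : nat,
     q (S t) - q t <= - (eta * (q t) ^ 2) / ln (exp 1 - ln (theta * q t)))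
  (H0 : theta * q 0%nat <= 1) :
  forall T : nat, 1 <= eta * INR T / theta ->
    q T <= / (eta * INR T) * ln (exp 1 + ln (eta * INR T / theta)).
Proof.
  intros T HT.
  assert (q_pos : forall t, 0 < q t) by (intro t; apply Hq).
  pose proof (q_pos T) as HqT.
  assert (HetaT : 0 < eta * INR T).
  { replace (eta * INR T) with (eta * INR T / theta * theta) by (field; lra).
    apply Rmult_lt_0_compat; lra. }
  assert (HT0 : 0 < INR T)
    by (apply (Rmult_lt_reg_l eta); [lra | rewrite Rmult_0_r; exact HetaT]).
  assert (Hfixed : eta * INR T / theta * (theta * q T) <= llog (theta * q T)).
  { replace (eta * INR T / theta * (theta * q T)) with (eta * INR T * q T)
      by (field; lra).
    exact (eta_T_q_le_llog q Heta Htheta q_pos Hrec H0 T). }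
  apply le_llog_inv in Hfixed;
    [| exact HT | apply Rmult_lt_0_compat; lra
     | exact (theta_q_le_1 q Heta Htheta q_pos Hrec H0 T)].
  rewrite llog_inv in Hfixed by lra.
  replace (q T) with (/ (eta * INR T) * (eta * INR T / theta * (theta * q T)))
    by (field; lra).
  apply Rmult_le_compat_l; [apply Rlt_le, Rinv_0_lt_compat |]; assumption.
Qed.
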